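(* Let $m\ge n\ge k$ be positive integers, $A\in\mathbb{R}^{m\times n}$ with $A^TA=I_n$, $x^*\in\mathbb{R}^n$ with support $S^*$, $|S^*|\le k$, and $y=Ax^*$ (i.e. $e=0$). Then for every initialization $\mathcal{X}^0$ and $\eta>0$ of SEA, $B=\sup_{t\in\mathbb{N}}\|u^t-\eta A^T(Ax^t-y)\|_\infty=0$. As a consequence, for every such $x^*$, for the initialization $\mathcal{X}^0=0$ and every $\eta>0$, if SEA is run for $N>k+1$ iterations, then $S^*\subseteq S^{t_{BEST}}$ and $x^{t_{BEST}}=x^*$.
   Context: $S^*=\{i:x^*_i\neq0\}$. For $v\in\mathbb{R}^n$, $\mathrm{largest}_k(v)$ is the set of indices of the $k$ entries of $v$ with largest absolute value (ties broken by selecting the highest indices). For $S\subseteq\{1,\dots,n\}$, $A_S$ is the submatrix of columns indexed by $S$, $v_S$ the restriction of a vector to $S$, $A_S^\dagger$ the Moore–Penrose pseudoinverse of $A_S$. SEA with initialization $\mathcal{X}^0$ and step size $\eta$ generates, for $t=0,1,2,\dots$: $S^t=\mathrm{largest}_k(\mathcal{X}^t)$; $x^t_i=0$ for $i\notin S^t$ and $x^t_{S^t}=A_{S^t}^\dagger y$; $\mathcal{X}^{t+1}=\mathcal{X}^t-\eta A^T(Ax^t-y)$. When run for $N$ iterations (computing $x^0,\dots,x^{N-1}$), SEA outputs $x^{t_{BEST}}$ with $t_{BEST}\in\arg\min_{t'\in\{0,\dots,N-1\}}\|Ax^{t'}-y\|_2$. The oracle direction is $u^t_i=-\eta x^*_i$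 if $i\in S^*\setminus S^t$ and $u^t_i=0$ otherwise. *)

From HB Require Import structures.
From mathcomp Require Import all_boot all_order all_algebra.
From mathcomp Require Import all_classical all_reals.
From mathcomp Require Import ereal.
Set Implicit Arguments. Unset Strict Implicit. Unset Printing Implicit Defensive.
Import Order.TTheory GRing.Theory Num.Theory.
Local Open Scope ring_scope.
Local Open Scope classical_set_scope.

(* Moore-Penrose conditions (real matrices: conjugate transpose = transpose) *)
Definition is_mp_pinv (R : realType) (p q : nat) (M : 'M[R]_(p, q)) (P : 'M[R]_(q, p)) : Prop :=
  [/\ M *m P *m M = M, P *m M *m P = P, (M *m P)^T = M *m P & (P *m M)^T = P *m M].

(* The Moore-Penrose pseudoinverse: the (unique, always existing) matrix satisfying
   the Penrose conditions. *)
Definition pinv (R : realType) (p q : nat) (M : 'M[R]_(p, q)) : 'M[R]_(q, p) :=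
  xget 0 [set P | is_mp_pinv M P].

Definition vsupp (R : realType) (n : nat) (x : 'cV[R]_n) : {set 'I_n} :=
  [set i | x i 0 != 0].

Definition beats (R : realType) (n : nat) (v : 'cV[R]_n) (j i : 'I_n) : bool :=
  (`|v i 0| < `|v j 0|) || ((`|v j 0| == `|v i 0|) && (i < j)%N).

(* largest_k(v): the k indices of largest absolute value, ties broken toward
   higher indices: i is selected iff fewer than k indices beat it. *)
Definition largest (R : realType) (k n : nat) (v : 'cV[R]_n) : {set 'I_n} :=
  [set i | (#|[set j | beats v j i]| < k)%N].

(* A_S : columns of A indexed by S (in increasing order) *)
Definition subcols (R : realType) (m n : nat) (A : 'M[R]_(m, n)) (S : {set 'I_n})
  : 'M[R]_(m, #|S|) := colsub (@enum_val _ (mem S)) A.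

Definition restricted_ls (R : realType) (m n : nat) (A : 'M[R]_(m, n)) (y : 'cV[R]_m)
  (S : {set 'I_n}) : 'cV[R]_n :=
  let v := pinv (subcols A S) *m y in
  \col_i \sum_(j < #|S|) (if enum_val j == i then v j 0 else 0).

Fixpoint sea_X (R : realType) (m n k : nat) (A : 'M[R]_(m, n)) (y : 'cV[R]_m)
  (eta : R) (X0 : 'cV[R]_n) (t : nat) : 'cV[R]_n :=
  match t with
  | 0 => X0
  | t'.+1 =>
      let Xt := sea_X k A y eta X0 t' in
      Xt - eta *: (A^T *m (A *m restricted_ls A y (largest k Xt) - y))
  end.

Definition sea_S (R : realType) (m n k : nat) (A : 'M[R]_(m, n)) (y : 'cV[R]_m)
  (eta : R) (X0 : 'cV[R]_n) (t : nat) : {set 'I_n} :=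
  largest k (sea_X k A y eta X0 t).

Definition sea_x (R : realType) (m n k : nat) (A : 'M[R]_(m, n)) (y : 'cV[R]_m)
  (eta : R) (X0 : 'cV[R]_n) (t : nat) : 'cV[R]_n :=
  restricted_ls A y (sea_S k A y eta X0 t).

Definition oracle_u (R : realType) (n : nat) (eta : R) (xs : 'cV[R]_n) (S : {set 'I_n})
  : 'cV[R]_n :=
  \col_i (if (i \in vsupp xs) && (i \notin S) then - (eta * xs i 0) else 0).

Definition norminf (R : realType) (n : nat) (v : 'cV[R]_n) : R :=
  \big[Num.max/0]_i `|v i 0|.

Definition norm2 (R : realType) (n : nat) (v : 'cV[R]_n) : R :=
  Num.sqrt (\sum_i v i 0 ^+ 2).

From Pilot Require Import Defs.
From HB Require Import structures.
From mathcomp Require Import all_boot all_order all_algebra.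
From mathcomp Require Import all_classical all_reals.
From mathcomp Require Import ereal.
Set Implicit Arguments. Unset Strict Implicit. Unset Printing Implicit Defensive.
Import Order.TTheory GRing.Theory Num.Theory.
Local Open Scope ring_scope.

(* When A has orthonormal columns and y = A x*, the least-squares solution on a
   support S is just the restriction of x* to S, and the gradient step of SEA
   is X^{t+1} = X^t + eta x*_{~S^t}.  Hence the oracle direction coincides with
   the gradient step, so B = 0.  Started from 0, the support of X^t stays inside
   that of x*, hence has at most k elements and is always selected by
   largest_k; as long as S* is not covered by S^t, the step adds a new index of
   S* to the support of X^t.  So S* is covered after at most k steps, at which
   point the residual vanishes, and any iterate of least residual is x*. *)

Section Vectors.
Variables (R : realType) (n : nat).

Definition vrestrict (S : {set 'I_n}) (x : 'cV[R]_n) : 'cV[R]_n :=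
  \col_i (if i \in S then x i 0 else 0).

Lemma vrestrictD_compl (S : {set 'I_n}) (x : 'cV[R]_n) :
  vrestrict S x + vrestrict (~: S) x = x.
Proof.
apply/matrixP => i j; rewrite ord1 !mxE finset.in_setC.
by case: (i \in S); rewrite ?addr0 ?add0r.
Qed.

Lemma vrestrict_subr (S : {set 'I_n}) (x : 'cV[R]_n) :
  vrestrict S x - x = - vrestrict (~: S) x.
Proof. by rewrite -{2}(vrestrictD_compl S x) opprD addrA subrr sub0r. Qed.

Lemma vrestrict_idP (S : {set 'I_n}) (x : 'cV[R]_n) :
  reflect (vrestrict S x = x) (vsupp x \subset S).
Proof.
apply: (iffP fintype.subsetP) => [supS | xS i].
  apply/matrixP => i j; rewrite ord1 mxE.
  by case: ifPn => // iS; apply/esym/eqP; apply: contraNT iS => xi; apply: supS; rewrite inE.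
by rewrite inE -{1}xS mxE; case: ifP; rewrite ?eqxx.
Qed.

Lemma vsupp_sub_largest (k : nat) (v : 'cV[R]_n) :
  (#|vsupp v| <= k)%N -> vsupp v \subset largest k v.
Proof.
move=> supp_k; apply/fintype.subsetP => i iv; rewrite /largest inE.
have beats_supp : [set j | beats v j i]%classic \subset vsupp v :\ i.
  apply/fintype.subsetP => j; rewrite in_setE /= !inE /beats; move: iv; rewrite inE => vi0.
  have [->|ji] := eqVneq j i; first by rewrite ltxx eqxx ltnn.
  apply: contraTneq => ->; rewrite normr0 ltNge normr_ge0 /= eq_sym normr_eq0.
  by rewrite (negbTE vi0).
apply: leq_ltn_trans (subset_leq_card beats_supp) _.
by move: supp_k; rewrite (cardsD1 i) iv.
Qed.

Lemma norm2_le0 (v : 'cV[R]_n) : (norm2 v <= 0) = (v == 0).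
Proof.
apply/idP/eqP => [|->]; last first.
  by rewrite /norm2 big1 ?sqrtr0 // => i _; rewrite mxE expr0n.
rewrite /norm2 le_eqVlt ltNge sqrtr_ge0 orbF sqrtr_eq0 => sum_le0.
have /psumr_eq0P sq0 : \sum_i v i 0 ^+ 2 = 0.
  by apply/eqP; rewrite eq_le sum_le0 sumr_ge0 // => i _; rewrite sqr_ge0.
apply/matrixP => i j; rewrite ord1 mxE.
by apply/eqP; rewrite -sqrf_eq0 sq0 // => l _; rewrite sqr_ge0.
Qed.

Lemma norminf0 : norminf (0 : 'cV[R]_n) = 0.
Proof.
rewrite /norminf; apply: (big_ind (eq^~ 0)) => [|a b -> ->|i _]; first by [].
  by rewrite maxxx.
by rewrite mxE normr0.
Qed.

End Vectors.

Lemma pinv_orthonormal (R : realType) (p q : nat) (M : 'M[R]_(p, q)) :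
  M^T *m M = 1%:M -> Defs.pinv M = M^T.
Proof.
move=> orthM; rewrite /Defs.pinv.
case: xgetP => [P _ [MPM _ MP_sym _] | noP]; last first.
  exfalso; apply: (noP M^T); split.
  - by rewrite -mulmxA orthM mulmx1.
  - by rewrite orthM mul1mx.
  - by rewrite trmx_mul trmxK.
  - by rewrite orthM trmx1.
have PM : P *m M = 1%:M.
  by have := congr1 (mulmx M^T) MPM; rewrite !mulmxA orthM !mul1mx.
(* P = M^T M P = M^T (M P)^T = M^T (P M)^T = M^T *)
by rewrite -[P]mul1mx -orthM -mulmxA -MP_sym trmx_mul mulmxA -trmx_mul PM trmx1 mul1mx.
Qed.

Section Orthonormal.
Variables (R : realType) (m n : nat) (A : 'M[R]_(m, n)).
Hypothesis orthA : A^T *m A = 1%:M.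

Lemma subcols_orthonormal (S : {set 'I_n}) :
  (subcols A S)^T *m subcols A S = 1%:M.
Proof.
rewrite /subcols trmx_mxsub -mxsub_mul orthA.
by apply/matrixP => i j; rewrite !mxE (inj_eq enum_val_inj).
Qed.

Lemma restricted_ls_orthonormal (xs : 'cV[R]_n) (S : {set 'I_n}) :
  restricted_ls A (A *m xs) S = vrestrict S xs.
Proof.
rewrite /restricted_ls pinv_orthonormal ?subcols_orthonormal //.
rewrite /subcols trmx_mxsub mulmxA mul_rowsub_mx orthA -rowsubE.
apply/matrixP => i j; rewrite !mxE.
under eq_bigr => l _ do rewrite mxE.
rewrite -(big_enum_val (fun s => if s == i then xs s 0 else 0)) /=.
case: (boolP (i \in S)) => iS.
  by rewrite (bigD1 i) //= eqxx big1 ?addr0 // => l /andP[_ /negbTE ->].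
by rewrite big1 // => l lS; case: eqP => // li; rewrite -li lS in iS.
Qed.

Lemma trmx_mul_residual (x xs : 'cV[R]_n) : A^T *m (A *m x - A *m xs) = x - xs.
Proof. by rewrite mulmxBr !mulmxA orthA !mul1mx. Qed.

Lemma oracle_u_sub_grad (eta : R) (xs : 'cV[R]_n) (S : {set 'I_n}) :
  oracle_u eta xs S - eta *: (A^T *m (A *m restricted_ls A (A *m xs) S - A *m xs)) = 0.
Proof.
rewrite restricted_ls_orthonormal trmx_mul_residual vrestrict_subr scalerN opprK.
apply/matrixP => i j; rewrite !mxE finset.in_setC inE.
case: (i \in S); rewrite ?andbF ?add0r ?mulr0 //=.
by case: eqP => [->|_]; rewrite ?mulr0 ?add0r // addNr.
Qed.

End Orthonormal.

Section SEA.
Variables (R : realType) (m n k : nat) (A : 'M[R]_(m, n)) (xs : 'cV[R]_n) (eta : R).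
Hypothesis orthA : A^T *m A = 1%:M.

Local Notation y := (A *m xs).

Lemma sea_x_orthonormal X0 t : sea_x k A y eta X0 t = vrestrict (sea_S k A y eta X0 t) xs.
Proof. exact: restricted_ls_orthonormal. Qed.

Lemma sea_X_succ X0 t :
  sea_X k A y eta X0 t.+1 = sea_X k A y eta X0 t + eta *: vrestrict (~: sea_S k A y eta X0 t) xs.
Proof.
by rewrite /= restricted_ls_orthonormal // trmx_mul_residual // vrestrict_subr scalerN opprK.
Qed.

Hypothesis supp_k : (#|vsupp xs| <= k)%N.
Hypothesis eta_gt0 : 0 < eta.

Local Notation X t := (sea_X k A y eta 0 t).
Local Notation S t := (sea_S k A y eta 0 t).

Lemma sea_X_succE t i :
  X t.+1 i 0 = X t i 0 + eta * (if i \in S t then 0 else xs i 0).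
Proof. by rewrite sea_X_succ !mxE finset.in_setC; case: (i \in S t). Qed.

Lemma vsupp_sea_X t : vsupp (X t) \subset vsupp xs.
Proof.
elim: t => [|t IH]; apply/fintype.subsetP => i; rewrite !inE; first by rewrite mxE eqxx.
rewrite sea_X_succE; have [xi0|//] := eqVneq (xs i 0) 0.
rewrite xi0 if_same mulr0 addr0 => Xi.
by have := fintype.subsetP IH i; rewrite !inE Xi xi0 eqxx => /(_ isT).
Qed.

Lemma vsupp_sea_X_sub_S t : vsupp (X t) \subset S t.
Proof.
apply: vsupp_sub_largest; apply: leq_trans supp_k.
exact/subset_leq_card/vsupp_sea_X.
Qed.

Lemma sea_X_notin_S t i : i \notin S t -> X t i 0 = 0.
Proof.
move=> iS; apply/eqP; apply: contraNT iS => Xi.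
by apply: (fintype.subsetP (vsupp_sea_X_sub_S t)); rewrite inE.
Qed.

Lemma vsupp_sea_X_proper t :
  ~~ (vsupp xs \subset S t) -> vsupp (X t) \proper vsupp (X t.+1).
Proof.
case/fintype.subsetPn => i ixs iS; apply/fintype.properP; split.
  apply/fintype.subsetP => j jX; have jS := fintype.subsetP (vsupp_sea_X_sub_S t) j jX.
  by move: jX; rewrite !inE sea_X_succE jS mulr0 addr0.
exists i; last by rewrite inE negbK sea_X_notin_S.
move: ixs; rewrite !inE sea_X_succE sea_X_notin_S // (negbTE iS) add0r => xi0.
by rewrite mulf_neq0 // gt_eqF.
Qed.

Lemma sea_cover_or_growth t :
  (exists2 s, (s < t)%N & vsupp xs \subset S s) \/ (t <= #|vsupp (X t)|)%N.
Proof.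
elim: t => [|t [[s st covered] | grown]]; first by right.
  by left; exists s => //; apply: ltnW.
have [covered | uncovered] := boolP (vsupp xs \subset S t); first by left; exists t.
by right; apply: leq_ltn_trans grown (proper_card (vsupp_sea_X_proper uncovered)).
Qed.

Lemma sea_S_covers : exists2 s, (s <= k)%N & vsupp xs \subset S s.
Proof.
have [[s] | grown] := sea_cover_or_growth k.+1; first by exists s.
have := leq_trans grown (leq_trans (subset_leq_card (vsupp_sea_X k.+1)) supp_k).
by rewrite ltnn.
Qed.

End SEA.

Local Open Scope classical_set_scope.

Theorem corollaryC7 (R : realType) (m n k : nat) (A : 'M[R]_(m, n))
  (xs : 'cV[R]_n) (y : 'cV[R]_m) :
  (0 < k)%N -> (k <= n)%N -> (n <= m)%N ->
  A^T *m A = 1%:M ->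
  (#|vsupp xs| <= k)%N ->
  y = A *m xs ->
  (forall (X0 : 'cV[R]_n) (eta : R), 0 < eta ->
     ereal_sup (range (fun t : nat =>
       (norminf (oracle_u eta xs (sea_S k A y eta X0 t)
                 - eta *: (A^T *m (A *m sea_x k A y eta X0 t - y))))%:E)) = 0%E)
  /\
  (forall (eta : R) (N : nat), 0 < eta -> (k.+1 < N)%N ->
     forall tb : nat, (tb < N)%N ->
       (forall t' : nat, (t' < N)%N ->
          norm2 (A *m sea_x k A y eta 0 tb - y) <= norm2 (A *m sea_x k A y eta 0 t' - y)) ->
       vsupp xs \subset sea_S k A y eta 0 tb /\ sea_x k A y eta 0 tb = xs).
Proof.
move=> _ _ _ orthA supp_k ->; split.
  move=> X0 eta _; set f := fun t : nat => _.
  have -> : f = cst 0%E.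
    by apply: funext => t; rewrite /f oracle_u_sub_grad // norminf0.
  by rewrite set_cst (negbTE setT0) ereal_sup1.
move=> eta N eta_gt0 kN tb tbN tb_best.
have [s sk covered] := sea_S_covers orthA supp_k eta_gt0.
have xs_s : sea_x k A (A *m xs) eta 0 s = xs.
  by rewrite sea_x_orthonormal //; apply/vrestrict_idP.
have res_tb0 : A *m sea_x k A (A *m xs) eta 0 tb - A *m xs = 0.
  apply/eqP; rewrite -norm2_le0.
  apply: le_trans (tb_best s (leq_ltn_trans sk (ltnW kN))) _.
  by rewrite xs_s subrr norm2_le0.
have xs_tb : sea_x k A (A *m xs) eta 0 tb = xs.
  by apply/eqP; rewrite -subr_eq0 -(trmx_mul_residual orthA) res_tb0 mulmx0.
by split=> //; apply/vrestrict_idP; rewrite -sea_x_orthonormal.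
Qed.
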